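(* Let $N\ge 2$ and let $\Gamma_1,\dots,\Gamma_N$ be nonzero real numbers. Consider the system of $N$ planar point sources $$\dot z_k = -\sum_{l\neq k}\Gamma_l\,\frac{z_k-z_l}{|z_k-z_l|^2}=-\sum_{l\neq k}\frac{\Gamma_l}{\bar z_k-\bar z_l},\qquad k=1,\dots,N,$$ on the set of configurations $(z_1,\dots,z_N)\in\mathbb{C}^N$ with $z_j\neq z_k$ for all $j\neq k$, and let $I=\sum_{k=1}^N\Gamma_k|z_k|^2$ be the moment of inertia. If $\sum_{l<k}\Gamma_k\Gamma_l=0$, then $I$ is a first integral of the system. If $\sum_{l<k}\Gamma_k\Gamma_l\neq 0$, then all solutions are gradient-like with respect to $I$, i.e. $I$ is strictly monotone along every solution.
   Context: The number $-\Gamma_k$ is the intensity of the $k$-th point source; the sum $\sum_{l<k}\Gamma_k\Gamma_l$ runs over all unordered pairs of distinct indices. *)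

(* R : realType. A point z_k in C is encoded by its
   real coordinates (x_k, y_k). *)
From HB Require Import structures.
From mathcomp Require Import all_boot all_order all_algebra.
From mathcomp Require Import all_classical all_reals all_analysis.
Set Implicit Arguments. Unset Strict Implicit. Unset Printing Implicit Defensive.
Import Order.TTheory GRing.Theory Num.Theory.
Import numFieldNormedType.Exports.
Local Open Scope ring_scope.
Local Open Scope classical_set_scope.

Section PointSources.
Variables (R : realType) (N : nat).

Definition sqdist (x y : 'I_N -> R) (k l : 'I_N) : R :=
  (x k - x l) ^+ 2 + (y k - y l) ^+ 2.

Definition velx (G x y : 'I_N -> R) (k : 'I_N) : R :=
  - \sum_(l < N | l != k) G l * (x k - x l) / sqdist x y k l.
Definition vely (G x y : 'I_N -> R) (k : 'I_N) : R :=
  - \sum_(l < N | l != k) G l * (y k - y l) / sqdist x y k l.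

Definition distinct_config (x y : 'I_N -> R) : Prop :=
  forall j k : 'I_N, j != k -> (x j, y j) != (x k, y k).

Definition is_solution (G : 'I_N -> R) (J : set R) (x y : R -> 'I_N -> R) : Prop :=
  forall t, J t ->
    distinct_config (x t) (y t) /\
    forall k : 'I_N,
      derivable (fun s => x s k) t 1 /\ derivable (fun s => y s k) t 1 /\
      (fun s => x s k)^`() t = velx G (x t) (y t) k /\
      (fun s => y s k)^`() t = vely G (x t) (y t) k.

Definition inertia (G x y : 'I_N -> R) : R :=
  \sum_(k < N) G k * (x k ^+ 2 + y k ^+ 2).

Definition pair_sum (G : 'I_N -> R) : R :=
  \sum_(k < N) \sum_(l < N | (l < k)%N) G k * G l.

End PointSources.

From HB Require Import structures.
From mathcomp Require Import all_boot all_order all_algebra.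
From mathcomp Require Import all_classical all_reals all_analysis.
From mathcomp Require Import ring.
Set Implicit Arguments. Unset Strict Implicit. Unset Printing Implicit Defensive.
Import Order.TTheory GRing.Theory Num.Theory.
Import numFieldNormedType.Exports.
Local Open Scope ring_scope.
Local Open Scope classical_set_scope.

(* Along a solution, dI/dt = sum_k 2 Gamma_k <z_k, dz_k/dt>.  Expanding the
   velocities, each unordered pair {k, l} contributes
   -2 Gamma_k Gamma_l (<z_k, z_k - z_l> + <z_l, z_l - z_k>) / |z_k - z_l|^2
   = -2 Gamma_k Gamma_l, so dI/dt = -2 sum_{l<k} Gamma_k Gamma_l is constant.
   Hence I is affine in time: constant when the pair sum vanishes, strictly
   monotone otherwise. *)

Lemma sum_offdiag_pairs (V : nmodType) n (f : 'I_n -> 'I_n -> V) :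
  \sum_(k < n) \sum_(l < n | l != k) f k l
  = \sum_(k < n) \sum_(l < n | (l < k)%N) (f k l + f l k).
Proof.
have split_neq k : \sum_(l < n | l != k) f k l
    = \sum_(l < n | (l < k)%N) f k l + \sum_(l < n | (k < l)%N) f k l.
  rewrite (bigID (fun l : 'I_n => (l < k)%N)) /=; congr (_ + _).
    by apply: eq_bigl => l; rewrite andb_idl // => lk; rewrite neq_ltn lk.
  by apply: eq_bigl => l; rewrite -leqNgt ltn_neqAle eq_sym.
rewrite (eq_bigr _ (fun k _ => split_neq k)) big_split /=.
rewrite [X in _ + X](exchange_big_dep xpredT) //= -big_split /=.
by apply: eq_bigr => k _; rewrite big_split.
Qed.

Section PairIdentity.
Variables (R : realType) (N : nat) (G x y : 'I_N -> R).

Lemma sqdistC k l : sqdist x y k l = sqdist x y l k.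
Proof. by rewrite /sqdist; ring. Qed.

Lemma sqdist_neq0 k l : distinct_config x y -> l != k -> sqdist x y k l != 0.
Proof.
move=> D lk; apply: contra (D _ _ lk); rewrite /sqdist.
rewrite paddr_eq0 ?sqr_ge0 // !sqrf_eq0 !subr_eq0.
by case/andP => /eqP -> /eqP ->.
Qed.

Lemma inertia_rate : distinct_config x y ->
  \sum_(k < N) G k * (x k * velx G x y k + y k * vely G x y k) = - pair_sum G.
Proof.
move=> D; pose f k l :=
  G k * G l * (x k * (x k - x l) + y k * (y k - y l)) / sqdist x y k l.
have expand k : G k * (x k * velx G x y k + y k * vely G x y k)
    = - \sum_(l < N | l != k) f k l.
  rewrite /velx /vely !mulrN !mulr_sumr -opprD -big_split mulrN mulr_sumr /=.
  by congr (- _); apply: eq_bigr => l _; rewrite /f; ring.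
have pair (k l : 'I_N) : (l < k)%N -> f k l + f l k = G k * G l.
  move=> lk; have dkl : sqdist x y k l != 0 by rewrite sqdist_neq0 // neq_ltn lk.
  apply: (mulIf dkl); rewrite /f [sqdist x y l k]sqdistC mulrDl !mulfVK //.
  by rewrite /sqdist; ring.
rewrite (eq_bigr _ (fun k _ => expand k)) sumrN sum_offdiag_pairs /pair_sum.
by congr (- _); apply: eq_bigr => k _; apply: eq_bigr => l; apply: pair.
Qed.

End PairIdentity.

Lemma is_derive_inertia (R : realType) N (G : 'I_N -> R) J x y t :
  is_solution G J x y -> J t ->
  is_derive t 1 (fun s => inertia G (x s) (y s)) (- (2 * pair_sum G)).
Proof.
move=> S Jt; have [D H] := S t Jt.
rewrite -mulrN -(inertia_rate G D) mulr_sumr.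
have -> : (fun s => inertia G (x s) (y s))
    = \sum_(k < N) (fun s => G k * (x s k ^+ 2 + y s k ^+ 2)).
  by apply/funext => s; rewrite /inertia fct_sumE.
apply: is_derive_sum => k; have [dx [dy [ex ey]]] := H k.
have Dx : is_derive t 1 (fun s => x s k) (velx G (x t) (y t) k).
  by rewrite -ex derive1E; apply: derivableP.
have Dy : is_derive t 1 (fun s => y s k) (vely G (x t) (y t) k).
  by rewrite -ey derive1E; apply: derivableP.
have -> : (fun s => G k * (x s k ^+ 2 + y s k ^+ 2))
    = G k \*: ((fun s => x s k) ^+ 2 + (fun s => y s k) ^+ 2) by [].
by apply: is_derive_eq; rewrite /= expr1 /GRing.scale /=; ring.
Qed.

Lemma inertia_affine (R : realType) N (G : 'I_N -> R) J x y s t :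
  is_interval J -> is_solution G J x y -> J s -> J t -> s < t ->
  inertia G (x t) (y t) - inertia G (x s) (y s) = - (2 * pair_sum G) * (t - s).
Proof.
move=> IJ S Js Jt st.
have sub z : z \in `[s, t]%R -> J z.
  by rewrite in_itv /= => zst; apply: (IJ s t).
have deriv z : z \in `]s, t[%R ->
    is_derive z 1 (fun r => inertia G (x r) (y r)) (- (2 * pair_sum G)).
  rewrite in_itv /= => /andP[sz zt]; apply: is_derive_inertia S _.
  by apply: sub; rewrite in_itv /= !ltW.
have cont : {within `[s, t], continuous (fun r => inertia G (x r) (y r))}.
  apply: derivable_within_continuous => z zst.
  by case: (is_derive_inertia S (sub z zst)).
by have [c _ ->] := MVT st deriv cont.
Qed.

Theorem mainTheorem2 (R : realType) (N : nat) (G : 'I_N -> R) :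
  (2 <= N)%N ->
  (forall k, G k != 0) ->
  (pair_sum G = 0 ->
     forall (J : set R) (x y : R -> 'I_N -> R),
       open J -> is_interval J -> is_solution G J x y ->
       forall s t, J s -> J t -> inertia G (x s) (y s) = inertia G (x t) (y t))
  /\
  (pair_sum G != 0 ->
     forall (J : set R) (x y : R -> 'I_N -> R),
       open J -> is_interval J -> is_solution G J x y ->
       (forall s t, J s -> J t -> s < t ->
          inertia G (x s) (y s) < inertia G (x t) (y t))
       \/
       (forall s t, J s -> J t -> s < t ->
          inertia G (x t) (y t) < inertia G (x s) (y s))).
Proof.
move=> _ _; split=> [P0 J x y _ IJ S s t Js Jt | P0 J x y _ IJ S].
  have const u v : J u -> J v -> u < v ->
      inertia G (x u) (y u) = inertia G (x v) (y v).
    move=> Ju Jv uv; apply/eqP; rewrite eq_sym -subr_eq0.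
    by rewrite (inertia_affine IJ S Ju Jv uv) P0 mulr0 oppr0 mul0r.
  by case: (ltgtP s t) => [st|ts|->] //; [apply: const | symmetry; apply: const].
case: (ltgtP (pair_sum G) 0) => [Pn|Pp|Pz]; last by rewrite Pz eqxx in P0.
  left=> s t Js Jt st; rewrite -subr_gt0 (inertia_affine IJ S Js Jt st).
  by rewrite pmulr_lgt0 ?subr_gt0 // oppr_gt0 pmulr_rlt0.
right=> s t Js Jt st; rewrite -subr_lt0 (inertia_affine IJ S Js Jt st).
by rewrite pmulr_llt0 ?subr_gt0 // oppr_lt0 pmulr_rgt0.
Qed.
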